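(* Let $\mathcal M$ be a Type $\mathcal A$ affine surface geometry and let $\mathcal Q_c:=\mathcal Q(\mathcal M)\otimes_{\mathbb R}\mathbb C$. (1) $\mathcal Q_c$ has a basis consisting of functions of the form $e^{\alpha_1x^1+\alpha_2x^2}p(x^1,x^2)$, where $(\alpha_1,\alpha_2)\in\mathbb C^2$, $p$ is a (complex) polynomial of degree at most $2$ in $(x^1,x^2)$, and $e^{\alpha_1x^1+\alpha_2x^2}\in\mathcal Q_c$. (2) There exist real linear functions $L_1,L_2,L_3$, a real polynomial $Q$ of degree at most $2$, and a basis $\mathcal B$ of $\mathcal Q(\mathcal M)$ of one of the following four forms: $\mathcal B=\{e^{L_1}\cos(L_2),e^{L_1}\sin(L_2),e^{L_3}\}$, $\mathcal B=\{e^{L_1},e^{L_2},e^{L_3}\}$, $\mathcal B=\{e^{L_1},L_2e^{L_1},e^{L_3}\}$, or $\mathcal B=\{e^{L_1},L_2e^{L_1},Qe^{L_1}\}$.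
   Context: An affine manifold $(M,\nabla)$ is a smooth manifold $M$ of dimension $m\ge 2$ with a torsion-free connection $\nabla$ on $TM$; in local coordinates $\nabla_{\partial_{x^i}}\partial_{x^j}=\Gamma_{ij}^k\partial_{x^k}$ (summation over repeated indices). The curvature is $R(X,Y)Z=\nabla_X\nabla_YZ-\nabla_Y\nabla_XZ-\nabla_{[X,Y]}Z$, the Ricci tensor is $\rho(Y,Z)=\mathrm{Tr}(X\mapsto R(X,Y)Z)$, and $\rho_s(X,Y)=\frac12(\rho(X,Y)+\rho(Y,X))$. The Hessian is $\mathcal H_\nabla f=(\partial_{x^i}\partial_{x^j}f-\Gamma_{ij}^k\partial_{x^k}f)\,dx^i\otimes dx^j$. The quasi-Einstein solution space is $\mathcal Q(M,\nabla)=\{f\in C^\infty(M):\mathcal H_\nabla f+\frac{1}{m-1}f\rho_s=0\}$. For real constants, $\Gamma(a,b,c,d,e,f)$ denotes the connection on (an open subset of) $\mathbb R^2$ whose Christoffel symbols in the standard coordinates $(x^1,x^2)$ are the constants $\Gamma_{11}^1=a$, $\Gamma_{11}^2=b$, $\Gamma_{12}^1=\Gamma_{21}^1=c$, $\Gamma_{12}^2=\Gamma_{21}^2=d$, $\Gamma_{22}^1=e$, $\Gamma_{22}^2=f$. A Type $\mathcal A$ affine surface geometry is $(\mathbb R^2,\Gamma(a,b,c,d,e,f))$. A (real) linear function is a function $L(x^1,x^2)=\alpha_1x^1+\alpha_2x^2$ with $\alpha_1,\alpha_2\in\mathbb R$. *)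

From Stdlib Require Import Reals.
Open Scope R_scope.

Inductive I2 : Type := i1 | i2.
Definition sumI2 (g : I2 -> R) : R := g i1 + g i2.

(** A connection with constant Christoffel symbols: Conn i j k = Gamma_{ij}^k. *)
Definition Conn := I2 -> I2 -> I2 -> R.

Definition GammaA (a b c d e f : R) : Conn := fun i j k =>
  match i, j, k with
  | i1, i1, i1 => a
  | i1, i1, i2 => b
  | i1, i2, i1 | i2, i1, i1 => c
  | i1, i2, i2 | i2, i1, i2 => d
  | i2, i2, i1 => e
  | i2, i2, i2 => f
  end.

(** Curvature of a constant-coefficient connection on coordinate fields:
    R(d_i,d_j) d_k = Rcurv G i j k m d_m, obtained from
    nabla_{d_i} nabla_{d_j} d_k - nabla_{d_j} nabla_{d_i} d_k (the bracket vanishes,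
    and the Christoffel symbols are constant). *)
Definition Rcurv (G : Conn) (i j k m : I2) : R :=
  sumI2 (fun l => G j k l * G i l m - G i k l * G j l m).

(** Ricci tensor rho(d_j,d_k) = Tr (X |-> R(X,d_j) d_k). *)
Definition ricci (G : Conn) (j k : I2) : R := sumI2 (fun i => Rcurv G i j k i).

Definition ricci_s (G : Conn) (i j : I2) : R := (ricci G i j + ricci G j i) / 2.

Definition partial1 (f g : R -> R -> R) : Prop :=
  forall x y, derivable_pt_lim (fun t => f t y) x (g x y).
Definition partial2 (f g : R -> R -> R) : Prop :=
  forall x y, derivable_pt_lim (fun t => f x t) y (g x y).
Definition Dpart (i : I2) (f g : R -> R -> R) : Prop :=
  match i with i1 => partial1 f g | i2 => partial2 f g end.

Definition cont2 (f : R -> R -> R) : Prop :=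
  forall x y eps, 0 < eps -> exists del, 0 < del /\
    forall x' y', Rabs (x' - x) < del -> Rabs (y' - y) < del ->
      Rabs (f x' y' - f x y) < eps.

CoInductive smooth (f : R -> R -> R) : Prop :=
  smooth_intro : forall g1 g2 : R -> R -> R,
    cont2 f -> partial1 f g1 -> partial2 f g2 -> smooth g1 -> smooth g2 -> smooth f.

(** Quasi-Einstein solution space on (R^2, G), m = 2:
    H f + 1/(m-1) f rho_s = 0, with H f_{ij} = d_i d_j f - Gamma_{ij}^k d_k f. *)
Definition in_Q (G : Conn) (f : R -> R -> R) : Prop :=
  smooth f /\
  exists (d : I2 -> R -> R -> R) (dd : I2 -> I2 -> R -> R -> R),
    (forall i, Dpart i f (d i)) /\
    (forall i j, Dpart i (d j) (dd i j)) /\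
    (forall i j x y,
       dd i j x y - sumI2 (fun k => G i j k * d k x y)
       + / (2 - 1) * f x y * ricci_s G i j = 0).

Fixpoint rsum (n : nat) (g : nat -> R) : R :=
  match n with O => 0 | S n' => rsum n' g + g n' end.

Definition rbasis_Q (G : Conn) (n : nat) (B : nat -> R -> R -> R) : Prop :=
  (forall k, (k < n)%nat -> in_Q G (B k)) /\
  (forall c : nat -> R, (forall x y, rsum n (fun k => c k * B k x y) = 0) ->
     forall k, (k < n)%nat -> c k = 0) /\
  (forall F, in_Q G F -> exists c : nat -> R,
     forall x y, F x y = rsum n (fun k => c k * B k x y)).

Definition Cx := (R * R)%type.
Definition C0 : Cx := (0, 0).
Definition RC (r : R) : Cx := (r, 0).
Definition Cadd (z w : Cx) : Cx := (fst z + fst w, snd z + snd w).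
Definition Cmul (z w : Cx) : Cx :=
  (fst z * fst w - snd z * snd w, fst z * snd w + snd z * fst w).
Definition Cexp (z : Cx) : Cx := (exp (fst z) * cos (snd z), exp (fst z) * sin (snd z)).

Fixpoint csum (n : nat) (g : nat -> Cx) : Cx :=
  match n with O => C0 | S n' => Cadd (csum n' g) (g n') end.

(** Q_c = Q(M) (x)_R C, realised as complex-valued functions u + i v with u, v in Q(M). *)
Definition in_Qc (G : Conn) (F : R -> R -> Cx) : Prop :=
  in_Q G (fun x y => fst (F x y)) /\ in_Q G (fun x y => snd (F x y)).

Definition cbasis_Qc (G : Conn) (n : nat) (B : nat -> R -> R -> Cx) : Prop :=
  (forall k, (k < n)%nat -> in_Qc G (B k)) /\
  (forall c : nat -> Cx, (forall x y, csum n (fun k => Cmul (c k) (B k x y)) = C0) ->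
     forall k, (k < n)%nat -> c k = C0) /\
  (forall F, in_Qc G F -> exists c : nat -> Cx,
     forall x y, F x y = csum n (fun k => Cmul (c k) (B k x y))).

Definition cexplin (a1 a2 : Cx) (x y : R) : Cx :=
  Cexp (Cadd (Cmul a1 (RC x)) (Cmul a2 (RC y))).

Definition cpoly2 (p : nat -> nat -> Cx) (x y : R) : Cx :=
  csum 3 (fun i => csum (3 - i) (fun j => Cmul (p i j) (RC (x ^ i * y ^ j)))).

Definition rpoly2 (q : nat -> nat -> R) (x y : R) : R :=
  rsum 3 (fun i => rsum (3 - i) (fun j => q i j * (x ^ i * y ^ j))).

Definition lin (l : R * R) (x y : R) : R := fst l * x + snd l * y.

(* The quasi-Einstein equation is a linear second-order system of finite type: along a
   coordinate line, [(f, d1 f, d2 f)] solves a linear ODE, so a solution is determined by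
   its 1-jet at the origin and [dim Q <= 3].  Since the Christoffel symbols are constant,
   [e^{mu.x}] is a solution exactly when [mu] is a (complex) root of the characteristic
   system [mu_i mu_j - Gamma_ij^k mu_k + rho_s(i,j) = 0], and degenerate roots contribute
   polynomial factors of degree at most 2.  Solving this system for [Gamma(a,b,c,d,e,f)]
   (for [b <> 0], eliminating [q] leaves a real cubic in [p], which has a real root)
   always yields three solutions of one of the four shapes with independent 1-jets,
   hence a basis of [Q]; complexifying it gives (1). *)

From Stdlib Require Import Reals Lra Lia Nsatz FunctionalExtensionality.
From Coquelicot Require Import Coquelicot.
Open Scope R_scope.

(** * Uniqueness for linear systems of ODEs *)

Lemma increasing_of_derive (h h' : R -> R) :
  (forall t, derivable_pt_lim h t (h' t)) -> (forall t, 0 <= h' t) -> increasing h.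
Proof.
  intros Hd Hpos.
  apply (nonneg_derivative_1 h (fun t => exist _ (h' t) (Hd t))); exact Hpos.
Qed.

Lemma decreasing_of_derive (h h' : R -> R) :
  (forall t, derivable_pt_lim h t (h' t)) -> (forall t, h' t <= 0) -> decreasing h.
Proof.
  intros Hd Hneg.
  apply (nonpos_derivative_1 h (fun t => exist _ (h' t) (Hd t))); exact Hneg.
Qed.

(* [E e^{-Kt}] decreases and [E e^{Kt}] increases, and both vanish at [t = 0]. *)
Lemma gronwall_zero (E E' : R -> R) (K : R) :
  (forall t, derivable_pt_lim E t (E' t)) -> (forall t, Rabs (E' t) <= K * E t) ->
  (forall t, 0 <= E t) -> E 0 = 0 -> forall t, E t = 0.
Proof.
  intros Hd Hb Hpos E0 t.
  assert (Hexp : forall s k, derivable_pt_lim (fun s => exp (k * s)) s (k * exp (k * s))).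
  { intros s k. apply is_derive_Reals. auto_derive; auto. ring. }
  assert (Hb' : forall s, - (K * E s) <= E' s <= K * E s) by (intro s; apply Rabs_le_between, Hb).
  apply Rle_antisym; [| apply Hpos].
  destruct (Rle_dec 0 t) as [Ht | Ht].
  - assert (Hdec : decreasing (fun s => E s * exp (- K * s))).
    { apply decreasing_of_derive with (fun s => (E' s - K * E s) * exp (- K * s)).
      - intro s. replace ((E' s - K * E s) * exp (- K * s))
          with (E' s * exp (- K * s) + E s * (- K * exp (- K * s))) by ring.
        apply (derivable_pt_lim_mult E (fun s => exp (- K * s))); [apply Hd | apply Hexp].
      - intro s. specialize (Hb' s). assert (Hp := exp_pos (- K * s)). nra. }
    specialize (Hdec 0 t Ht). cbv beta in Hdec. rewrite E0 in Hdec.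
    assert (Hp := exp_pos (- K * t)). nra.
  - assert (Hinc : increasing (fun s => E s * exp (K * s))).
    { apply increasing_of_derive with (fun s => (E' s + K * E s) * exp (K * s)).
      - intro s. replace ((E' s + K * E s) * exp (K * s))
          with (E' s * exp (K * s) + E s * (K * exp (K * s))) by ring.
        apply (derivable_pt_lim_mult E (fun s => exp (K * s))); [apply Hd | apply Hexp].
      - intro s. specialize (Hb' s). assert (Hp := exp_pos (K * s)). nra. }
    specialize (Hinc t 0 ltac:(lra)). cbv beta in Hinc. rewrite E0 in Hinc.
    assert (Hp := exp_pos (K * t)). nra.
Qed.

Lemma Rabs_mul_le (m a b E : R) : a * a + b * b <= 2 * E -> Rabs (m * a * b) <= Rabs m * E.
Proof.
  intro H. rewrite !Rabs_mult.
  assert (Hab : Rabs a * Rabs b <= E).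
  { assert (Ha : Rabs a * Rabs a = a * a) by (rewrite <- Rabs_mult; apply Rabs_pos_eq; nra).
    assert (Hb : Rabs b * Rabs b = b * b) by (rewrite <- Rabs_mult; apply Rabs_pos_eq; nra).
    assert (0 <= (Rabs a - Rabs b) * (Rabs a - Rabs b)) by apply Rle_0_sqr.
    nra. }
  assert (0 <= Rabs m) by apply Rabs_pos. nra.
Qed.

Section LinearSystem3.
Variables (u0 u1 u2 : R -> R) (m00 m01 m02 m10 m11 m12 m20 m21 m22 : R).
Hypothesis du0 : forall t, derivable_pt_lim u0 t (m00 * u0 t + m01 * u1 t + m02 * u2 t).
Hypothesis du1 : forall t, derivable_pt_lim u1 t (m10 * u0 t + m11 * u1 t + m12 * u2 t).
Hypothesis du2 : forall t, derivable_pt_lim u2 t (m20 * u0 t + m21 * u1 t + m22 * u2 t).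
Hypotheses (u0_0 : u0 0 = 0) (u1_0 : u1 0 = 0) (u2_0 : u2 0 = 0).

Let E s := u0 s * u0 s + u1 s * u1 s + u2 s * u2 s.
Let E' s := 2 * (m00 * u0 s * u0 s + m01 * u0 s * u1 s + m02 * u0 s * u2 s
               + m10 * u1 s * u0 s + m11 * u1 s * u1 s + m12 * u1 s * u2 s
               + m20 * u2 s * u0 s + m21 * u2 s * u1 s + m22 * u2 s * u2 s).
Let K := 2 * (Rabs m00 + Rabs m01 + Rabs m02 + Rabs m10 + Rabs m11 + Rabs m12
              + Rabs m20 + Rabs m21 + Rabs m22).

Lemma energy_derivative s : derivable_pt_lim E s (E' s).
Proof.
  replace (E' s) with
    ((m00 * u0 s + m01 * u1 s + m02 * u2 s) * u0 s + u0 s * (m00 * u0 s + m01 * u1 s + m02 * u2 s)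
     + ((m10 * u0 s + m11 * u1 s + m12 * u2 s) * u1 s + u1 s * (m10 * u0 s + m11 * u1 s + m12 * u2 s))
     + ((m20 * u0 s + m21 * u1 s + m22 * u2 s) * u2 s + u2 s * (m20 * u0 s + m21 * u1 s + m22 * u2 s)))
    by (unfold E'; ring).
  apply (derivable_pt_lim_plus (fun s => u0 s * u0 s + u1 s * u1 s) (fun s => u2 s * u2 s)).
  - apply (derivable_pt_lim_plus (fun s => u0 s * u0 s) (fun s => u1 s * u1 s));
      apply derivable_pt_lim_mult; auto.
  - apply derivable_pt_lim_mult; auto.
Qed.

Lemma energy_derivative_bound s : Rabs (E' s) <= K * E s.
Proof.
  assert (Hsq : 0 <= u0 s * u0 s /\ 0 <= u1 s * u1 s /\ 0 <= u2 s * u2 s)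
    by (repeat split; apply Rle_0_sqr).
  assert (Hmn : forall m a b, a * a + b * b <= 2 * E s -> - (Rabs m * E s) <= m * a * b <= Rabs m * E s)
    by (intros; apply Rabs_le_between, Rabs_mul_le; assumption).
  pose proof (Hmn m00 (u0 s) (u0 s)). pose proof (Hmn m01 (u0 s) (u1 s)).
  pose proof (Hmn m02 (u0 s) (u2 s)). pose proof (Hmn m10 (u1 s) (u0 s)).
  pose proof (Hmn m11 (u1 s) (u1 s)). pose proof (Hmn m12 (u1 s) (u2 s)).
  pose proof (Hmn m20 (u2 s) (u0 s)). pose proof (Hmn m21 (u2 s) (u1 s)).
  pose proof (Hmn m22 (u2 s) (u2 s)).
  unfold E', K, E in *. apply Rabs_le_between. lra.
Qed.

Lemma linear_system3_zero t : u0 t = 0 /\ u1 t = 0 /\ u2 t = 0.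
Proof.
  assert (HE : E t = 0).
  { apply (gronwall_zero E E' K energy_derivative energy_derivative_bound).
    - intro s. unfold E. nra.
    - unfold E. rewrite u0_0, u1_0, u2_0. ring. }
  unfold E in HE. nra.
Qed.
End LinearSystem3.

(** * The solution space and its bases *)

Definition QE_eqs (G : Conn) (f : R -> R -> R) (d : I2 -> R -> R -> R)
    (dd : I2 -> I2 -> R -> R -> R) : Prop :=
  (forall i, Dpart i f (d i)) /\ (forall i j, Dpart i (d j) (dd i j)) /\
  (forall i j x y, dd i j x y - sumI2 (fun k => G i j k * d k x y)
                   + / (2 - 1) * f x y * ricci_s G i j = 0).

Lemma QE_eqs_second_derivative G f d dd i j x y : QE_eqs G f d dd ->
  dd i j x y = G i j i1 * d i1 x y + G i j i2 * d i2 x y - ricci_s G i j * f x y.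
Proof.
  intros (_ & _ & H). specialize (H i j x y). unfold sumI2 in H.
  replace (/ (2 - 1)) with 1 in H by field. lra.
Qed.

(* Along a coordinate line, [(f, d1 f, d2 f)] solves a linear system of ODEs;
   integrate first along the [x]-axis, then along the vertical lines. *)
Lemma QE_eqs_zero_of_jet0 G f d dd : QE_eqs G f d dd ->
  f 0 0 = 0 -> d i1 0 0 = 0 -> d i2 0 0 = 0 -> forall x y, f x y = 0.
Proof.
  intros HQ F0 D10 D20.
  assert (Hsd := fun i j x y => QE_eqs_second_derivative G f d dd i j x y HQ).
  destruct HQ as (Hd & Hdd & _).
  assert (Haxis : forall t, f t 0 = 0 /\ d i1 t 0 = 0 /\ d i2 t 0 = 0).
  { intro t.
    apply (linear_system3_zero (fun t => f t 0) (fun t => d i1 t 0) (fun t => d i2 t 0)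
      0 1 0 (- ricci_s G i1 i1) (G i1 i1 i1) (G i1 i1 i2)
      (- ricci_s G i1 i2) (G i1 i2 i1) (G i1 i2 i2)); auto; intro s.
    - replace (_ + _) with (d i1 s 0) by ring. apply (Hd i1).
    - replace (_ + _) with (dd i1 i1 s 0) by (rewrite Hsd; ring). apply (Hdd i1 i1).
    - replace (_ + _) with (dd i1 i2 s 0) by (rewrite Hsd; ring). apply (Hdd i1 i2). }
  intros x y.
  apply (linear_system3_zero (fun s => f x s) (fun s => d i1 x s) (fun s => d i2 x s)
    0 0 1 (- ricci_s G i2 i1) (G i2 i1 i1) (G i2 i1 i2)
    (- ricci_s G i2 i2) (G i2 i2 i1) (G i2 i2 i2)); try apply Haxis; intro s.
  - replace (_ + _) with (d i2 x s) by ring. apply (Hd i2).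
  - replace (_ + _) with (dd i2 i1 x s) by (rewrite Hsd; ring). apply (Hdd i2 i1).
  - replace (_ + _) with (dd i2 i2 x s) by (rewrite Hsd; ring). apply (Hdd i2 i2).
Qed.

Lemma Dpart_unique i f g h x y : Dpart i f g -> Dpart i f h -> g x y = h x y.
Proof. destruct i; intros Hg Hh; eapply uniqueness_limite; eauto. Qed.

Lemma Dpart_zero i (f g : R -> R -> R) x y : (forall x y, f x y = 0) -> Dpart i f g -> g x y = 0.
Proof.
  intros Hf Hg. apply (Dpart_unique i f g (fun _ _ => 0) x y Hg).
  destruct i; intros u v; apply is_derive_Reals;
    apply is_derive_ext with (fun _ => 0); try (intro; rewrite Hf; reflexivity);
    apply is_derive_Reals, derivable_pt_lim_const.
Qed.

Lemma derivable_pt_lim_lin3 (F G H : R -> R) a b c x lF lG lH :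
  derivable_pt_lim F x lF -> derivable_pt_lim G x lG -> derivable_pt_lim H x lH ->
  derivable_pt_lim (fun t => a * F t + b * G t + c * H t) x (a * lF + b * lG + c * lH).
Proof.
  rewrite <- !is_derive_Reals. intros.
  apply (is_derive_plus (fun t => a * F t + b * G t) (fun t => c * H t));
    [apply (is_derive_plus (fun t => a * F t) (fun t => b * G t)) |];
    apply is_derive_scal; assumption.
Qed.

Lemma Dpart_lin3 i f f' g g' h h' a b c : Dpart i f f' -> Dpart i g g' -> Dpart i h h' ->
  Dpart i (fun x y => a * f x y + b * g x y + c * h x y)
          (fun x y => a * f' x y + b * g' x y + c * h' x y).
Proof. destruct i; intros Hf Hg Hh x y; apply derivable_pt_lim_lin3; auto. Qed.

Lemma QE_eqs_lin3 G f d dd g e ee h k kk a b c :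
  QE_eqs G f d dd -> QE_eqs G g e ee -> QE_eqs G h k kk ->
  QE_eqs G (fun x y => a * f x y + b * g x y + c * h x y)
    (fun i x y => a * d i x y + b * e i x y + c * k i x y)
    (fun i j x y => a * dd i j x y + b * ee i j x y + c * kk i j x y).
Proof.
  intros (Hf1 & Hf2 & Hf3) (Hg1 & Hg2 & Hg3) (Hh1 & Hh2 & Hh3). split; [| split].
  - intro i. apply Dpart_lin3; auto.
  - intros i j. apply Dpart_lin3; auto.
  - intros i j x y. specialize (Hf3 i j x y). specialize (Hg3 i j x y). specialize (Hh3 i j x y).
    unfold sumI2 in *. nra.
Qed.

Definition det3 a1 a2 a3 b1 b2 b3 c1 c2 c3 : R :=
  a1 * (b2 * c3 - b3 * c2) - a2 * (b1 * c3 - b3 * c1) + a3 * (b1 * c2 - b2 * c1).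

Lemma det3_solve a1 a2 a3 b1 b2 b3 c1 c2 c3 u1 u2 u3 : det3 a1 a2 a3 b1 b2 b3 c1 c2 c3 <> 0 ->
  exists x y z, x * a1 + y * b1 + z * c1 = u1 /\ x * a2 + y * b2 + z * c2 = u2 /\
                x * a3 + y * b3 + z * c3 = u3.
Proof.
  intro D.
  exists (det3 u1 u2 u3 b1 b2 b3 c1 c2 c3 / det3 a1 a2 a3 b1 b2 b3 c1 c2 c3),
         (det3 a1 a2 a3 u1 u2 u3 c1 c2 c3 / det3 a1 a2 a3 b1 b2 b3 c1 c2 c3),
         (det3 a1 a2 a3 b1 b2 b3 u1 u2 u3 / det3 a1 a2 a3 b1 b2 b3 c1 c2 c3).
  unfold det3 in *. repeat split; field; exact D.
Qed.

Lemma det3_kernel a1 a2 a3 b1 b2 b3 c1 c2 c3 x y z : det3 a1 a2 a3 b1 b2 b3 c1 c2 c3 <> 0 ->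
  x * a1 + y * b1 + z * c1 = 0 -> x * a2 + y * b2 + z * c2 = 0 -> x * a3 + y * b3 + z * c3 = 0 ->
  x = 0 /\ y = 0 /\ z = 0.
Proof.
  intros D E1 E2 E3.
  assert (X : x * det3 a1 a2 a3 b1 b2 b3 c1 c2 c3 = 0) by (unfold det3; nsatz).
  assert (Y : y * det3 a1 a2 a3 b1 b2 b3 c1 c2 c3 = 0) by (unfold det3; nsatz).
  assert (Z : z * det3 a1 a2 a3 b1 b2 b3 c1 c2 c3 = 0) by (unfold det3; nsatz).
  apply Rmult_integral in X, Y, Z. intuition.
Qed.

Definition B3 (B0 B1 B2 : R -> R -> R) (k : nat) : R -> R -> R :=
  match k with 0%nat => B0 | 1%nat => B1 | _ => B2 end.

(* A solution is determined by its 1-jet at the origin, so three solutions with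
   independent 1-jets form a basis. *)
Lemma rbasis_Q_of_jets G B0 B1 B2 d0 d1 d2 :
  in_Q G B0 -> in_Q G B1 -> in_Q G B2 ->
  (forall i, Dpart i B0 (d0 i)) -> (forall i, Dpart i B1 (d1 i)) -> (forall i, Dpart i B2 (d2 i)) ->
  det3 (B0 0 0) (d0 i1 0 0) (d0 i2 0 0) (B1 0 0) (d1 i1 0 0) (d1 i2 0 0)
       (B2 0 0) (d2 i1 0 0) (d2 i2 0 0) <> 0 ->
  rbasis_Q G 3 (B3 B0 B1 B2).
Proof.
  intros HB0 HB1 HB2 D0 D1 D2 Hdet.
  split; [| split].
  - intros k Hk. destruct k as [| [| [| k]]]; [assumption .. | lia].
  - intros c Hc.
    assert (Hz : forall x y, c 0%nat * B0 x y + c 1%nat * B1 x y + c 2%nat * B2 x y = 0)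
      by (intros x y; rewrite <- (Hc x y); simpl; ring).
    assert (Hdz := fun i =>
      Dpart_zero i _ _ 0 0 Hz (Dpart_lin3 i _ _ _ _ _ _ _ _ _ (D0 i) (D1 i) (D2 i))).
    cbv beta in Hdz.
    destruct (det3_kernel _ _ _ _ _ _ _ _ _ _ _ _ Hdet (Hz 0 0) (Hdz i1) (Hdz i2)) as (Z0 & Z1 & Z2).
    intros k Hk. destruct k as [| [| [| k]]]; [assumption .. | lia].
  - intros F (_ & dF & ddF & QF).
    destruct (det3_solve _ _ _ _ _ _ _ _ _ (F 0 0) (dF i1 0 0) (dF i2 0 0) Hdet)
      as (x0 & y0 & z0 & J0 & J1 & J2).
    exists (fun k => match k with 0%nat => x0 | 1%nat => y0 | _ => z0 end).
    destruct HB0 as (_ & e0 & ee0 & Q0), HB1 as (_ & e1 & ee1 & Q1), HB2 as (_ & e2 & ee2 & Q2).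
    assert (Hcomb := QE_eqs_lin3 _ _ _ _ _ _ _ _ _ _ x0 y0 z0 Q0 Q1 Q2).
    assert (Hdiff := QE_eqs_lin3 _ _ _ _ _ _ _ _ _ _ 1 (-1) 0 QF Hcomb QF).
    assert (Je : forall i, e0 i 0 0 = d0 i 0 0 /\ e1 i 0 0 = d1 i 0 0 /\ e2 i 0 0 = d2 i 0 0).
    { intro i. repeat split; eapply Dpart_unique;
        [apply (proj1 Q0) | apply D0 | apply (proj1 Q1) | apply D1 | apply (proj1 Q2) | apply D2]. }
    destruct (Je i1) as (E01 & E11 & E21), (Je i2) as (E02 & E12 & E22).
    intros x y. simpl.
    assert (Z := QE_eqs_zero_of_jet0 _ _ _ _ Hdiff); cbv beta in Z.
    rewrite E01, E11, E21, E02, E12, E22 in Z.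
    specialize (Z ltac:(lra) ltac:(lra) ltac:(lra) x y). lra.
Qed.

Lemma in_Q_ext G f g : in_Q G f -> (forall x y, f x y = g x y) -> in_Q G g.
Proof.
  intros H E. replace g with f; [exact H |].
  apply functional_extensionality; intro x; apply functional_extensionality; intro y; apply E.
Qed.

Lemma smooth_zero : smooth (fun _ _ => 0).
Proof.
  cofix IH. apply smooth_intro with (fun _ _ => 0) (fun _ _ => 0); auto.
  - intros x y eps Heps. exists 1. split; [lra |]. intros. rewrite Rminus_0_r, Rabs_R0. exact Heps.
  - intros x y. apply derivable_pt_lim_const.
  - intros x y. apply derivable_pt_lim_const.
Qed.

Lemma in_Q_zero G : in_Q G (fun _ _ => 0).
Proof.
  split; [apply smooth_zero |].
  exists (fun _ _ _ => 0), (fun _ _ _ _ => 0). split; [| split].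
  - intros [|] x y; apply derivable_pt_lim_const.
  - intros [|] j x y; apply derivable_pt_lim_const.
  - intros. unfold sumI2. ring.
Qed.

Lemma Dpart_opp i f g : Dpart i f g -> Dpart i (fun x y => - f x y) (fun x y => - g x y).
Proof.
  destruct i; intros H x y;
    [apply derivable_pt_lim_opp with (f := fun t => f t y)
    | apply derivable_pt_lim_opp with (f := fun t => f x t)];
    apply H.
Qed.

Lemma smooth_opp : forall f, smooth f -> smooth (fun x y => - f x y).
Proof.
  cofix IH. intros f [g1 g2 Hc H1 H2 S1 S2].
  apply smooth_intro with (fun x y => - g1 x y) (fun x y => - g2 x y).
  - intros x y eps Heps. destruct (Hc x y eps Heps) as (del & Hdel & Hf).
    exists del. split; [exact Hdel |]. intros x' y' Hx Hy.
    replace (- f x' y' - - f x y) with (- (f x' y' - f x y)) by ring.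
    rewrite Rabs_Ropp. auto.
  - apply (Dpart_opp i1), H1.
  - apply (Dpart_opp i2), H2.
  - apply IH, S1.
  - apply IH, S2.
Qed.

Lemma in_Q_opp G f : in_Q G f -> in_Q G (fun x y => - f x y).
Proof.
  intros (Hs & d & dd & Hd & Hdd & Heq). split; [apply smooth_opp, Hs |].
  exists (fun i x y => - d i x y), (fun i j x y => - dd i j x y). split; [| split].
  - intro i. apply Dpart_opp, Hd.
  - intros i j. apply Dpart_opp, Hdd.
  - intros i j x y. specialize (Heq i j x y). unfold sumI2 in *. lra.
Qed.

(** * Exponential-trigonometric polynomial solutions *)

Record quad := Quad { q00 : R; q10 : R; q01 : R; q20 : R; q11 : R; q02 : R }.

Definition quad_eval (P : quad) (x y : R) : R :=
  q00 P + q10 P * x + q01 P * y + q20 P * (x * x) + q11 P * (x * y) + q02 P * (y * y).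

Definition expquad (l w : R * R) (X : quad * quad) (x y : R) : R :=
  exp (lin l x y) * (quad_eval (fst X) x y * cos (lin w x y) + quad_eval (snd X) x y * sin (lin w x y)).

Lemma cont2_of_continuous (f : R -> R -> R) :
  (forall z, continuous (fun z : R * R => f (fst z) (snd z)) z) -> cont2 f.
Proof.
  intros H x y eps Heps.
  destruct (proj1 (filterlim_locally _ _) (H (x, y)) (mkposreal eps Heps)) as [del Hdel].
  exists del; split; [apply cond_pos |].
  intros x' y' Hx Hy; apply (Hdel (x', y')); split; assumption.
Qed.

Section Continuity2.
Implicit Types (F G : R * R -> R) (z : R * R).

Lemma cont2_plus F G z : continuous F z -> continuous G z -> continuous (fun u => F u + G u) z.
Proof. apply (continuous_plus F G). Qed.

Lemma cont2_mult F G z : continuous F z -> continuous G z -> continuous (fun u => F u * G u) z.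
Proof. apply (continuous_mult F G). Qed.

Lemma cont2_comp (g : R -> R) F z :
  (forall t, continuous g t) -> continuous F z -> continuous (fun u => g (F u)) z.
Proof. intros; apply (continuous_comp F g); auto. Qed.

End Continuity2.

Ltac continuity2 :=
  repeat match goal with
  | |- continuous (fun _ => _ + _) _ => apply cont2_plus
  | |- continuous (fun _ => _ * _) _ => apply cont2_mult
  | |- continuous (fun _ => exp _) _ => apply (cont2_comp exp); [apply continuous_exp |]
  | |- continuous (fun _ => cos _) _ => apply (cont2_comp cos); [apply continuous_cos |]
  | |- continuous (fun _ => sin _) _ => apply (cont2_comp sin); [apply continuous_sin |]
  | |- continuous fst _ => apply continuous_fst
  | |- continuous snd _ => apply continuous_snd
  | |- continuous (fun _ => _) _ => apply continuous_const
  end.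

Lemma expquad_cont2 l w X : cont2 (expquad l w X).
Proof.
  apply cont2_of_continuous; intro z; unfold expquad, quad_eval, lin.
  continuity2.
Qed.

Definition quad_const (a : R) : quad := Quad a 0 0 0 0 0.

Definition quad_lc (a : R) (P : quad) (b : R) (Q : quad) : quad :=
  Quad (a * q00 P + b * q00 Q) (a * q10 P + b * q10 Q) (a * q01 P + b * q01 Q)
       (a * q20 P + b * q20 Q) (a * q11 P + b * q11 Q) (a * q02 P + b * q02 Q).

Definition pair_lc (a : R) (X : quad * quad) (b : R) (Y : quad * quad) : quad * quad :=
  (quad_lc a (fst X) b (fst Y), quad_lc a (snd X) b (snd Y)).

Definition quad_d (i : I2) (P : quad) : quad :=
  match i with
  | i1 => Quad (q10 P) (2 * q20 P) (q11 P) 0 0 0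
  | i2 => Quad (q01 P) (q11 P) (2 * q02 P) 0 0 0
  end.

Definition coord (v : R * R) (i : I2) : R := match i with i1 => fst v | i2 => snd v end.

Definition expquad_d (l w : R * R) (i : I2) (X : quad * quad) : quad * quad :=
  (quad_lc 1 (quad_lc (coord l i) (fst X) 1 (quad_d i (fst X))) (coord w i) (snd X),
   quad_lc 1 (quad_lc (coord l i) (snd X) 1 (quad_d i (snd X))) (- coord w i) (fst X)).

Lemma expquad_Dpart l w i X : Dpart i (expquad l w X) (expquad l w (expquad_d l w i X)).
Proof.
  destruct i; intros x y; apply is_derive_Reals;
    unfold expquad, quad_eval, lin, expquad_d, quad_lc, quad_d, coord; simpl;
    auto_derive; auto; ring.
Qed.

Lemma expquad_smooth : forall l w X, smooth (expquad l w X).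
Proof.
  cofix IH. intros l w X.
  apply smooth_intro with (expquad l w (expquad_d l w i1 X)) (expquad l w (expquad_d l w i2 X)).
  - apply expquad_cont2.
  - apply (expquad_Dpart l w i1).
  - apply (expquad_Dpart l w i2).
  - apply IH.
  - apply IH.
Qed.

Lemma expquad_lc l w a X b Y x y :
  expquad l w (pair_lc a X b Y) x y = a * expquad l w X x y + b * expquad l w Y x y.
Proof. unfold expquad, pair_lc, quad_lc, quad_eval; simpl. ring. Qed.

Lemma expquad_at0 l w X : expquad l w X 0 0 = q00 (fst X).
Proof.
  unfold expquad, quad_eval, lin. rewrite !Rmult_0_r, !Rplus_0_r, exp_0, cos_0, sin_0. ring.
Qed.

(* Coefficients of [H f + rho_s f] for [f = expquad l w X]. *)
Definition expquad_hess (G : Conn) (l w : R * R) (i j : I2) (X : quad * quad) : quad * quad :=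
  pair_lc 1 (pair_lc 1 (pair_lc 1 (expquad_d l w i (expquad_d l w j X))
                                  (- G i j i1) (expquad_d l w i1 X))
                       (- G i j i2) (expquad_d l w i2 X))
          (ricci_s G i j) X.

Definition quad0 : quad := quad_const 0.

Lemma expquad_in_Q G l w X :
  (forall i j, expquad_hess G l w i j X = (quad0, quad0)) -> in_Q G (expquad l w X).
Proof.
  intro H. split; [apply expquad_smooth |].
  exists (fun i => expquad l w (expquad_d l w i X)),
         (fun i j => expquad l w (expquad_d l w i (expquad_d l w j X))).
  split; [| split].
  - intro i. apply expquad_Dpart.
  - intros i j. apply expquad_Dpart.
  - intros i j x y.
    assert (Hx := f_equal (fun Y => expquad l w Y x y) (H i j)). cbv beta in Hx.
    unfold expquad_hess in Hx. rewrite !expquad_lc in Hx.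
    replace (expquad l w (quad0, quad0) x y) with 0 in Hx
      by (unfold expquad, quad0, quad_const, quad_eval; simpl; ring).
    unfold sumI2. replace (/ (2 - 1)) with 1 by field. lra.
Qed.

Definition gamma_dot (G : Conn) (i j : I2) (v : R * R) : R := sumI2 (fun k => G i j k * coord v k).

(* [l + i w] is a root of the characteristic system
   [mu_i mu_j - Gamma_ij^k mu_k + rho_s(i,j) = 0], split into real and imaginary parts,
   i.e. [e^{(l + i w).x}] lies in the complexified solution space. *)
Definition char_root (G : Conn) (l w : R * R) : Prop :=
  forall i j,
    coord l i * coord l j - coord w i * coord w j - gamma_dot G i j l + ricci_s G i j = 0 /\
    coord l i * coord w j + coord l j * coord w i - gamma_dot G i j w = 0.

(* The condition on the linear part [u.x] of the factor of [e^{l.x} (c + u.x + R)], [R]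
   a quadratic form with Hessian [s], for a real root [l]. *)
Definition poly_cond (G : Conn) (l u : R * R) (s : I2 -> I2 -> R) : Prop :=
  forall i j, s i j + coord l i * coord u j + coord l j * coord u i - gamma_dot G i j u = 0.

Lemma expquad_trig_in_Q G l w a b :
  char_root G l w -> in_Q G (expquad l w (quad_const a, quad_const b)).
Proof.
  intro H. apply expquad_in_Q. intros i j. destruct (H i j) as [Hre Him].
  destruct i, j;
    cbv beta iota delta [expquad_hess expquad_d pair_lc quad_lc quad_d quad0 quad_const
      gamma_dot sumI2 coord fst snd q00 q10 q01 q20 q11 q02] in *;
    f_equal; f_equal; nsatz.
Qed.

Definition quad_sqr (c : R) (u v : R * R) : quad :=
  Quad c (fst u) (snd u) (fst v * fst v) (2 * fst v * snd v) (snd v * snd v).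

Lemma expquad_poly_in_Q G l c u v :
  char_root G l (0, 0) -> poly_cond G l v (fun _ _ => 0) ->
  poly_cond G l u (fun i j => 2 * coord v i * coord v j) ->
  in_Q G (expquad l (0, 0) (quad_sqr c u v, quad0)).
Proof.
  intros Hl Hv Hu. apply expquad_in_Q. intros i j.
  destruct (Hl i j) as [Hre _]. specialize (Hv i j). specialize (Hu i j).
  destruct i, j;
    cbv beta iota delta [expquad_hess expquad_d pair_lc quad_lc quad_d quad0 quad_const quad_sqr
      gamma_dot sumI2 coord fst snd q00 q10 q01 q20 q11 q02] in *;
    f_equal; f_equal; nsatz.
Qed.

Lemma rbasis_Q_expquad G l0 w0 X0 l1 w1 X1 l2 w2 X2 :
  in_Q G (expquad l0 w0 X0) -> in_Q G (expquad l1 w1 X1) -> in_Q G (expquad l2 w2 X2) ->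
  det3 (q00 (fst X0)) (q00 (fst (expquad_d l0 w0 i1 X0))) (q00 (fst (expquad_d l0 w0 i2 X0)))
       (q00 (fst X1)) (q00 (fst (expquad_d l1 w1 i1 X1))) (q00 (fst (expquad_d l1 w1 i2 X1)))
       (q00 (fst X2)) (q00 (fst (expquad_d l2 w2 i1 X2))) (q00 (fst (expquad_d l2 w2 i2 X2))) <> 0 ->
  rbasis_Q G 3 (B3 (expquad l0 w0 X0) (expquad l1 w1 X1) (expquad l2 w2 X2)).
Proof.
  intros H0 H1 H2 Hdet.
  apply (rbasis_Q_of_jets G _ _ _ _ _ _ H0 H1 H2
           (fun i => expquad_Dpart l0 w0 i X0) (fun i => expquad_Dpart l1 w1 i X1)
           (fun i => expquad_Dpart l2 w2 i X2)).
  rewrite !expquad_at0. exact Hdet.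
Qed.

Lemma poly_cond_zero G l : poly_cond G l (0, 0) (fun _ _ => 0).
Proof. intros i j. unfold gamma_dot, sumI2. destruct i, j; simpl; ring. Qed.

Lemma expquad_lin_in_Q G l c u :
  char_root G l (0, 0) -> poly_cond G l u (fun _ _ => 0) ->
  in_Q G (expquad l (0, 0) (quad_sqr c u (0, 0), quad0)).
Proof.
  intros Hl Hu. apply expquad_poly_in_Q; [exact Hl | apply poly_cond_zero |].
  intros i j. replace (2 * coord (0, 0) i * coord (0, 0) j) with 0 by (destruct i, j; simpl; ring).
  apply Hu.
Qed.

Lemma quad_sqr_eval c u v x y :
  quad_eval (quad_sqr c u v) x y = c + lin u x y + lin v x y * lin v x y.
Proof. unfold quad_eval, quad_sqr, lin; simpl. ring. Qed.

Lemma expquad_poly_eval l P x y : expquad l (0, 0) (P, quad0) x y = quad_eval P x y * exp (lin l x y).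
Proof.
  unfold expquad, quad0, quad_const, quad_eval, lin; simpl.
  rewrite !Rmult_0_l, Rplus_0_r, cos_0. ring.
Qed.

Lemma expquad_trig_eval l w a b x y : expquad l w (quad_const a, quad_const b) x y =
  exp (lin l x y) * (a * cos (lin w x y) + b * sin (lin w x y)).
Proof. unfold expquad, quad_const, quad_eval; simpl. ring. Qed.

Definition quad_coef (P : quad) (i j : nat) : R :=
  match i, j with
  | O, O => q00 P | 1%nat, O => q10 P | O, 1%nat => q01 P
  | 2%nat, O => q20 P | 1%nat, 1%nat => q11 P | O, 2%nat => q02 P
  | _, _ => 0
  end.

Lemma rpoly2_quad_coef P x y : rpoly2 (quad_coef P) x y = quad_eval P x y.
Proof. unfold rpoly2, quad_coef, quad_eval; simpl. ring. Qed.

(** * The four normal forms *)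

Definition real_normal_basis (G : Conn) : Prop :=
  exists (L1 L2 L3 : R * R) (q : nat -> nat -> R) (B : nat -> R -> R -> R),
     rbasis_Q G 3 B /\
     ( (forall x y, B 0%nat x y = exp (lin L1 x y) * cos (lin L2 x y) /\
                    B 1%nat x y = exp (lin L1 x y) * sin (lin L2 x y) /\
                    B 2%nat x y = exp (lin L3 x y))
     \/ (forall x y, B 0%nat x y = exp (lin L1 x y) /\
                     B 1%nat x y = exp (lin L2 x y) /\
                     B 2%nat x y = exp (lin L3 x y))
     \/ (forall x y, B 0%nat x y = exp (lin L1 x y) /\
                     B 1%nat x y = lin L2 x y * exp (lin L1 x y) /\
                     B 2%nat x y = exp (lin L3 x y))
     \/ (forall x y, B 0%nat x y = exp (lin L1 x y) /\
                     B 1%nat x y = lin L2 x y * exp (lin L1 x y) /\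
                     B 2%nat x y = rpoly2 q x y * exp (lin L1 x y))).

Ltac det_from Hd :=
  let E := fresh in intro E; apply Hd;
  match type of E with ?X = 0 => transitivity X; [unfold det3; cbn; ring | exact E] end.
Ltac lin_ring := unfold lin; cbn [fst snd]; ring.

Lemma normal_basis_trig G l w m :
  char_root G l w -> char_root G m (0, 0) ->
  det3 1 (fst l) (snd l) 0 (fst w) (snd w) 1 (fst m) (snd m) <> 0 -> real_normal_basis G.
Proof.
  intros Hl Hm Hd.
  exists l, w, m, (fun _ _ => 0),
    (B3 (expquad l w (quad_const 1, quad_const 0)) (expquad l w (quad_const 0, quad_const 1))
        (expquad m (0, 0) (quad_sqr 1 (0, 0) (0, 0), quad0))).
  split.
  - apply rbasis_Q_expquad;
      [apply expquad_trig_in_Q .. | apply expquad_lin_in_Q | det_from Hd]; auto.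
    apply poly_cond_zero.
  - left. intros x y. simpl. rewrite !expquad_trig_eval, expquad_poly_eval, quad_sqr_eval.
    repeat split; lin_ring.
Qed.

Lemma normal_basis_exp3 G m1 m2 m3 :
  char_root G m1 (0, 0) -> char_root G m2 (0, 0) -> char_root G m3 (0, 0) ->
  det3 1 (fst m1) (snd m1) 1 (fst m2) (snd m2) 1 (fst m3) (snd m3) <> 0 -> real_normal_basis G.
Proof.
  intros H1 H2 H3 Hd.
  exists m1, m2, m3, (fun _ _ => 0),
    (B3 (expquad m1 (0, 0) (quad_sqr 1 (0, 0) (0, 0), quad0))
        (expquad m2 (0, 0) (quad_sqr 1 (0, 0) (0, 0), quad0))
        (expquad m3 (0, 0) (quad_sqr 1 (0, 0) (0, 0), quad0))).
  split.
  - apply rbasis_Q_expquad; [apply expquad_lin_in_Q .. | det_from Hd]; auto using poly_cond_zero.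
  - right; left. intros x y. simpl. rewrite !expquad_poly_eval, !quad_sqr_eval.
    repeat split; lin_ring.
Qed.

Lemma normal_basis_exp2_lin G m1 u m3 :
  char_root G m1 (0, 0) -> poly_cond G m1 u (fun _ _ => 0) -> char_root G m3 (0, 0) ->
  det3 1 (fst m1) (snd m1) 0 (fst u) (snd u) 1 (fst m3) (snd m3) <> 0 -> real_normal_basis G.
Proof.
  intros H1 Hu H3 Hd.
  exists m1, u, m3, (fun _ _ => 0),
    (B3 (expquad m1 (0, 0) (quad_sqr 1 (0, 0) (0, 0), quad0))
        (expquad m1 (0, 0) (quad_sqr 0 u (0, 0), quad0))
        (expquad m3 (0, 0) (quad_sqr 1 (0, 0) (0, 0), quad0))).
  split.
  - apply rbasis_Q_expquad; [apply expquad_lin_in_Q .. | det_from Hd]; auto using poly_cond_zero.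
  - right; right; left. intros x y. simpl. rewrite !expquad_poly_eval, !quad_sqr_eval.
    repeat split; lin_ring.
Qed.

Lemma normal_basis_exp_quad G m u v w :
  char_root G m (0, 0) -> poly_cond G m u (fun _ _ => 0) -> poly_cond G m v (fun _ _ => 0) ->
  poly_cond G m w (fun i j => 2 * coord v i * coord v j) ->
  det3 1 (fst m) (snd m) 0 (fst u) (snd u) 0 (fst w) (snd w) <> 0 -> real_normal_basis G.
Proof.
  intros Hm Hu Hv Hw Hd.
  exists m, u, m, (quad_coef (quad_sqr 0 w v)),
    (B3 (expquad m (0, 0) (quad_sqr 1 (0, 0) (0, 0), quad0))
        (expquad m (0, 0) (quad_sqr 0 u (0, 0), quad0))
        (expquad m (0, 0) (quad_sqr 0 w v, quad0))).
  split.
  - apply rbasis_Q_expquad;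
      [apply expquad_lin_in_Q .. | apply expquad_poly_in_Q | det_from Hd]; auto using poly_cond_zero.
  - right; right; right. intros x y. simpl.
    rewrite !expquad_poly_eval, rpoly2_quad_coef, !quad_sqr_eval.
    repeat split; lin_ring.
Qed.

(** * Complexification *)

Definition complex_expoly_basis (G : Conn) : Prop :=
  exists (n : nat) (B : nat -> R -> R -> Cx),
     cbasis_Qc G n B /\
     forall k, (k < n)%nat ->
       exists (a1 a2 : Cx) (p : nat -> nat -> Cx),
         (forall x y, B k x y = Cmul (cexplin a1 a2 x y) (cpoly2 p x y)) /\
         in_Qc G (cexplin a1 a2).

Lemma cexplin_eq (L1 L2 : R * R) x y :
  cexplin (fst L1, fst L2) (snd L1, snd L2) x y =
  (exp (lin L1 x y) * cos (lin L2 x y), exp (lin L1 x y) * sin (lin L2 x y)).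
Proof.
  unfold cexplin, Cexp, Cadd, Cmul, RC, lin; simpl. f_equal; f_equal; f_equal; ring.
Qed.

Lemma cexplin_real (L : R * R) x y : cexplin (fst L, 0) (snd L, 0) x y = (exp (lin L x y), 0).
Proof.
  rewrite (cexplin_eq L (0, 0)). unfold lin at 2 4; simpl.
  rewrite !Rmult_0_l, Rplus_0_r, cos_0, sin_0. f_equal; ring.
Qed.

Lemma cpoly2_real (q : nat -> nat -> R) x y : cpoly2 (fun i j => RC (q i j)) x y = (rpoly2 q x y, 0).
Proof. unfold cpoly2, rpoly2, RC, Cmul, Cadd, C0; apply injective_projections; simpl; ring. Qed.

Lemma csum3 (g : nat -> Cx) :
  csum 3 g = (fst (g 0%nat) + fst (g 1%nat) + fst (g 2%nat),
              snd (g 0%nat) + snd (g 1%nat) + snd (g 2%nat)).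
Proof. unfold Cadd, C0; apply injective_projections; simpl; ring. Qed.

Lemma rsum3 (g : nat -> R) : rsum 3 g = g 0%nat + g 1%nat + g 2%nat.
Proof. simpl. ring. Qed.

Lemma in_Qc_ext G (F : R -> R -> Cx) u v :
  in_Q G u -> in_Q G v -> (forall x y, F x y = (u x y, v x y)) -> in_Qc G F.
Proof.
  intros Hu Hv E. split; [apply in_Q_ext with u | apply in_Q_ext with v]; auto;
    intros x y; rewrite E; reflexivity.
Qed.

Lemma csum_ext n (g h : nat -> Cx) : (forall k, (k < n)%nat -> g k = h k) -> csum n g = csum n h.
Proof.
  induction n as [| n IH]; intro E; [reflexivity |]. simpl.
  rewrite IH by (intros; apply E; lia). rewrite E by lia. reflexivity.
Qed.

Lemma cbasis_Qc_ext G n B B' : cbasis_Qc G n B ->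
  (forall k, (k < n)%nat -> forall x y, B k x y = B' k x y) -> cbasis_Qc G n B'.
Proof.
  intros (HB & Hind & Hspan) E.
  assert (Hsum : forall (c : nat -> Cx) x y,
    csum n (fun k => Cmul (c k) (B' k x y)) = csum n (fun k => Cmul (c k) (B k x y)))
    by (intros; apply csum_ext; intros; rewrite E; auto).
  split; [| split].
  - intros k Hk. destruct (HB k Hk) as [Hre Him].
    apply (in_Qc_ext G _ _ _ Hre Him). intros; rewrite <- E by exact Hk. apply surjective_pairing.
  - intros c Hc. apply Hind. intros x y. rewrite <- Hsum. apply Hc.
  - intros F HF. destruct (Hspan F HF) as [c Hc]. exists c. intros x y. rewrite Hsum. apply Hc.
Qed.

Lemma cbasis_Qc_of_rbasis G B : rbasis_Q G 3 B -> cbasis_Qc G 3 (fun k x y => (B k x y, 0)).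
Proof.
  intros (HB & Hind & Hspan). split; [| split].
  - intros k Hk. apply (in_Qc_ext G _ (B k) (fun _ _ => 0)); [auto | apply in_Q_zero | reflexivity].
  - intros c Hc.
    assert (Hparts : forall x y, rsum 3 (fun k => fst (c k) * B k x y) = 0 /\
                                 rsum 3 (fun k => snd (c k) * B k x y) = 0).
    { intros x y. specialize (Hc x y). rewrite csum3 in Hc. rewrite !rsum3.
      unfold Cmul, C0 in Hc; simpl in Hc. injection Hc; intros; split; lra. }
    intros k Hk. rewrite (surjective_pairing (c k)).
    rewrite (Hind _ (fun x y => proj1 (Hparts x y)) k Hk), (Hind _ (fun x y => proj2 (Hparts x y)) k Hk).
    reflexivity.
  - intros F [Fre Fim].
    destruct (Hspan _ Fre) as [u Hu], (Hspan _ Fim) as [v Hv].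
    exists (fun k => (u k, v k)). intros x y. rewrite csum3.
    specialize (Hu x y). specialize (Hv x y). rewrite rsum3 in Hu, Hv.
    rewrite (surjective_pairing (F x y)). unfold Cmul; simpl.
    apply injective_projections; simpl; [rewrite Hu | rewrite Hv]; ring.
Qed.

Lemma cbasis_Qc_conj_pair G B : rbasis_Q G 3 B ->
  cbasis_Qc G 3 (fun k x y => match k with
                              | 0%nat => (B 0%nat x y, B 1%nat x y)
                              | 1%nat => (B 0%nat x y, - B 1%nat x y)
                              | _ => (B 2%nat x y, 0) end).
Proof.
  intros (HB & Hind & Hspan). split; [| split].
  - intros k Hk. destruct k as [| [| [| k]]]; [| | | lia].
    + apply (in_Qc_ext G _ (B 0%nat) (B 1%nat)); [apply HB; lia .. | reflexivity].
    + apply (in_Qc_ext G _ (B 0%nat) (fun x y => - B 1%nat x y));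
        [apply HB; lia | apply in_Q_opp, HB; lia | reflexivity].
    + apply (in_Qc_ext G _ (B 2%nat) (fun _ _ => 0)); [apply HB; lia | apply in_Q_zero | reflexivity].
  - intros c Hc.
    set (x0 := fst (c 0%nat)); set (y0 := snd (c 0%nat)); set (x1 := fst (c 1%nat));
    set (y1 := snd (c 1%nat)); set (x2 := fst (c 2%nat)); set (y2 := snd (c 2%nat)).
    assert (Hparts : forall x y,
      rsum 3 (fun k => match k with 0%nat => x0 + x1 | 1%nat => y1 - y0 | _ => x2 end * B k x y) = 0 /\
      rsum 3 (fun k => match k with 0%nat => y0 + y1 | 1%nat => x0 - x1 | _ => y2 end * B k x y) = 0).
    { intros x y. specialize (Hc x y). rewrite csum3 in Hc. rewrite !rsum3.
      unfold Cmul, C0 in Hc; simpl in Hc. injection Hc as Hc1 Hc2.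
      unfold x0, x1, x2, y0, y1, y2. split; lra. }
    assert (Z := fun k Hk => Hind _ (fun x y => proj1 (Hparts x y)) k Hk).
    assert (Z' := fun k Hk => Hind _ (fun x y => proj2 (Hparts x y)) k Hk).
    pose proof (Z 0%nat ltac:(lia)); pose proof (Z 1%nat ltac:(lia)); pose proof (Z 2%nat ltac:(lia));
    pose proof (Z' 0%nat ltac:(lia)); pose proof (Z' 1%nat ltac:(lia)); pose proof (Z' 2%nat ltac:(lia)).
    cbv beta iota in *.
    intros k Hk. unfold C0. destruct k as [| [| [| k]]]; [| | | lia];
      rewrite (surjective_pairing (c _)); fold x0 y0 x1 y1 x2 y2; f_equal; lra.
  - intros F [Fre Fim].
    destruct (Hspan _ Fre) as [u Hu], (Hspan _ Fim) as [v Hv].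
    exists (fun k => match k with 0%nat => ((u 0%nat + v 1%nat) / 2, (v 0%nat - u 1%nat) / 2)
                             | 1%nat => ((u 0%nat - v 1%nat) / 2, (u 1%nat + v 0%nat) / 2)
                             | _ => (u 2%nat, v 2%nat) end).
    intros x y. rewrite csum3.
    specialize (Hu x y). specialize (Hv x y). rewrite rsum3 in Hu, Hv.
    rewrite (surjective_pairing (F x y)). unfold Cmul; simpl.
    apply injective_projections; simpl; [rewrite Hu | rewrite Hv]; field.
Qed.

Lemma complex_basis_of_expoly G (B : nat -> R -> R -> R) (L : nat -> R * R) (P : nat -> quad) :
  rbasis_Q G 3 B ->
  (forall k, (k < 3)%nat -> forall x y, B k x y = exp (lin (L k) x y) * quad_eval (P k) x y) ->
  (forall k, (k < 3)%nat -> in_Q G (fun x y => exp (lin (L k) x y))) ->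
  complex_expoly_basis G.
Proof.
  intros HB HBe HE.
  exists 3%nat, (fun k x y => Cmul (cexplin (fst (L k), 0) (snd (L k), 0) x y)
                                   (cpoly2 (fun i j => RC (quad_coef (P k) i j)) x y)).
  split.
  - apply (cbasis_Qc_ext G 3 _ _ (cbasis_Qc_of_rbasis G B HB)).
    intros k Hk x y. rewrite cexplin_real, cpoly2_real, rpoly2_quad_coef, HBe by exact Hk.
    unfold Cmul; simpl. f_equal; ring.
  - intros k Hk. exists (fst (L k), 0), (snd (L k), 0), (fun i j => RC (quad_coef (P k) i j)).
    split; [reflexivity |].
    apply (in_Qc_ext G _ _ (fun _ _ => 0) (HE k Hk) (in_Q_zero G)). apply cexplin_real.
Qed.

Lemma cpoly2_one x y : cpoly2 (fun i j => RC (quad_coef (quad_const 1) i j)) x y = (1, 0).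
Proof. rewrite cpoly2_real, rpoly2_quad_coef. unfold quad_eval, quad_const; simpl. f_equal; ring. Qed.

Lemma cexplin_conj (L1 L2 : R * R) x y :
  cexplin (fst L1, - fst L2) (snd L1, - snd L2) x y =
  (exp (lin L1 x y) * cos (lin L2 x y), - (exp (lin L1 x y) * sin (lin L2 x y))).
Proof.
  rewrite (cexplin_eq L1 (- fst L2, - snd L2)).
  replace (lin (- fst L2, - snd L2) x y) with (- lin L2 x y) by (unfold lin; simpl; ring).
  rewrite cos_neg, sin_neg. f_equal; ring.
Qed.

Lemma complex_basis_of_trig G (B : nat -> R -> R -> R) (L1 L2 L3 : R * R) :
  rbasis_Q G 3 B ->
  (forall x y, B 0%nat x y = exp (lin L1 x y) * cos (lin L2 x y) /\
               B 1%nat x y = exp (lin L1 x y) * sin (lin L2 x y) /\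
               B 2%nat x y = exp (lin L3 x y)) ->
  complex_expoly_basis G.
Proof.
  intros HB HBe.
  set (a := fun k => match k with
                     | 0%nat => ((fst L1, fst L2), (snd L1, snd L2))
                     | 1%nat => ((fst L1, - fst L2), (snd L1, - snd L2))
                     | _ => ((fst L3, 0), (snd L3, 0)) end).
  assert (Hbasis := cbasis_Qc_conj_pair G B HB).
  assert (Ha : forall k, (k < 3)%nat -> forall x y,
    match k with
    | 0%nat => (B 0%nat x y, B 1%nat x y)
    | 1%nat => (B 0%nat x y, - B 1%nat x y)
    | _ => (B 2%nat x y, 0) end = cexplin (fst (a k)) (snd (a k)) x y).
  { intros k Hk x y. destruct (HBe x y) as (E0 & E1 & E2). rewrite E0, E1, E2.
    destruct k as [| [| [| k]]]; [| | | lia]; unfold a; cbn [fst snd];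
      [rewrite cexplin_eq | rewrite cexplin_conj | rewrite cexplin_real]; reflexivity. }
  exists 3%nat, (fun k x y => Cmul (cexplin (fst (a k)) (snd (a k)) x y)
                                   (cpoly2 (fun i j => RC (quad_coef (quad_const 1) i j)) x y)).
  split.
  - apply (cbasis_Qc_ext G 3 _ _ Hbasis). intros k Hk x y.
    rewrite (Ha k Hk), cpoly2_one. unfold Cmul; simpl. apply injective_projections; simpl; ring.
  - intros k Hk. exists (fst (a k)), (snd (a k)), (fun i j => RC (quad_coef (quad_const 1) i j)).
    split; [reflexivity |].
    destruct (proj1 Hbasis k Hk) as [Hre Him].
    apply (in_Qc_ext G _ _ _ Hre Him). intros x y. rewrite <- (Ha k Hk). apply surjective_pairing.
Qed.

Definition quad_of_coef (q : nat -> nat -> R) : quad :=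
  Quad (q 0 0)%nat (q 1 0)%nat (q 0 1)%nat (q 2 0)%nat (q 1 1)%nat (q 0 2)%nat.

Lemma quad_of_coef_eval q x y : quad_eval (quad_of_coef q) x y = rpoly2 q x y.
Proof. unfold quad_eval, quad_of_coef, rpoly2; simpl. ring. Qed.

Lemma complex_basis_of_real_normal G : real_normal_basis G -> complex_expoly_basis G.
Proof.
  intros (L1 & L2 & L3 & q & B & HB & [H | [H | [H | H]]]);
    [exact (complex_basis_of_trig G B L1 L2 L3 HB H) | ..].
  - apply (complex_basis_of_expoly G B (fun k => match k with 0%nat => L1 | 1%nat => L2 | _ => L3 end)
             (fun _ => quad_const 1) HB).
    + intros k Hk x y. destruct (H x y) as (E0 & E1 & E2).
      destruct k as [| [| [| k]]]; [rewrite E0 | rewrite E1 | rewrite E2 | lia];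
        unfold quad_eval, quad_const; simpl; ring.
    + intros k Hk. destruct k as [| [| [| k]]];
        [apply in_Q_ext with (B 0%nat) | apply in_Q_ext with (B 1%nat)
        | apply in_Q_ext with (B 2%nat) | lia];
        (apply HB; lia) || (intros x y; destruct (H x y) as (E0 & E1 & E2); simpl; congruence).
  - apply (complex_basis_of_expoly G B (fun k => match k with 2%nat => L3 | _ => L1 end)
             (fun k => match k with 1%nat => quad_sqr 0 L2 (0, 0) | _ => quad_const 1 end) HB).
    + intros k Hk x y. destruct (H x y) as (E0 & E1 & E2).
      destruct k as [| [| [| k]]]; [rewrite E0 | rewrite E1 | rewrite E2 | lia];
        rewrite ?quad_sqr_eval; unfold quad_eval, quad_const, lin; simpl; ring.
    + intros k Hk. destruct k as [| [| [| k]]];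
        [apply in_Q_ext with (B 0%nat) | apply in_Q_ext with (B 0%nat)
        | apply in_Q_ext with (B 2%nat) | lia];
        (apply HB; lia) || (intros x y; destruct (H x y) as (E0 & E1 & E2); simpl; congruence).
  - apply (complex_basis_of_expoly G B (fun _ => L1)
             (fun k => match k with 0%nat => quad_const 1 | 1%nat => quad_sqr 0 L2 (0, 0)
                                  | _ => quad_of_coef q end) HB).
    + intros k Hk x y. destruct (H x y) as (E0 & E1 & E2).
      destruct k as [| [| [| k]]]; [rewrite E0 | rewrite E1 | rewrite E2 | lia];
        rewrite ?quad_sqr_eval, ?quad_of_coef_eval; unfold quad_eval, quad_const, lin; simpl; ring.
    + intros k Hk. apply in_Q_ext with (B 0%nat); [apply HB; lia |].
      intros x y. destruct (H x y) as (E0 & _). exact E0.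
Qed.

(** * Type A connections *)

Definition r11 (a b c d e f : R) : R := a * d + b * f - b * c - d * d.
Definition r12 (a b c d e f : R) : R := c * d - b * e.
Definition r22 (a b c d e f : R) : R := f * c + e * a - e * d - c * c.

Lemma ricci_s_GammaA a b c d e f i j :
  ricci_s (GammaA a b c d e f) i j =
  match i, j with
  | i1, i1 => r11 a b c d e f | i2, i2 => r22 a b c d e f | _, _ => r12 a b c d e f
  end.
Proof. unfold ricci_s, ricci, Rcurv, sumI2, r11, r12, r22. destruct i, j; simpl; field. Qed.

Lemma char_root_GammaA a b c d e f l1 l2 w1 w2 :
  l1 * l1 - w1 * w1 - a * l1 - b * l2 + r11 a b c d e f = 0 ->
  l1 * l2 - w1 * w2 - c * l1 - d * l2 + r12 a b c d e f = 0 ->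
  l2 * l2 - w2 * w2 - e * l1 - f * l2 + r22 a b c d e f = 0 ->
  2 * l1 * w1 - a * w1 - b * w2 = 0 ->
  l1 * w2 + w1 * l2 - c * w1 - d * w2 = 0 ->
  2 * l2 * w2 - e * w1 - f * w2 = 0 ->
  char_root (GammaA a b c d e f) (l1, l2) (w1, w2).
Proof.
  intros. intros i j. rewrite ricci_s_GammaA.
  destruct i, j; cbv beta iota delta [gamma_dot sumI2 coord fst snd GammaA]; split; lra.
Qed.

Lemma real_root_GammaA a b c d e f p q :
  p * p - a * p - b * q + r11 a b c d e f = 0 ->
  p * q - c * p - d * q + r12 a b c d e f = 0 ->
  q * q - e * p - f * q + r22 a b c d e f = 0 ->
  char_root (GammaA a b c d e f) (p, q) (0, 0).
Proof. intros; apply char_root_GammaA; lra. Qed.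

Lemma poly_cond_GammaA a b c d e f l1 l2 u1 u2 (s : I2 -> I2 -> R) :
  s i2 i1 = s i1 i2 ->
  s i1 i1 + 2 * l1 * u1 - a * u1 - b * u2 = 0 ->
  s i1 i2 + l1 * u2 + l2 * u1 - c * u1 - d * u2 = 0 ->
  s i2 i2 + 2 * l2 * u2 - e * u1 - f * u2 = 0 ->
  poly_cond (GammaA a b c d e f) (l1, l2) (u1, u2) s.
Proof.
  intros Hs. intros. intros i j.
  destruct i, j; cbv beta iota delta [gamma_dot sumI2 coord fst snd GammaA]; try rewrite Hs; lra.
Qed.

Lemma nonzero_of_mul_eq k X Y : k <> 0 -> Y <> 0 -> k * X = Y -> X <> 0.
Proof. intros Hk HY E HX. apply HY. rewrite <- E, HX. ring. Qed.

Ltac clear_ineqs := repeat match goal with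
  | H : _ <> _ |- _ => clear H | H : _ < _ |- _ => clear H | H : _ <= _ |- _ => clear H
  | H : _ > _ |- _ => clear H | H : _ >= _ |- _ => clear H
  end.

Ltac GammaA_conds :=
  first [ apply real_root_GammaA | apply char_root_GammaA
        | apply poly_cond_GammaA; [cbn; ring | ..]; cbn [coord fst snd] ];
  unfold r11, r12, r22 in *; clear_ineqs; nsatz.

Ltac det_nonzero k Y :=
  apply (nonzero_of_mul_eq k _ Y); [| | unfold det3; cbn [fst snd]; clear_ineqs; nsatz].

Lemma exists_pos_half_sqrt_opp D : D < 0 -> exists s, 0 < s /\ 4 * (s * s) = - D.
Proof.
  intro HD. exists (sqrt (- D) / 2). split.
  - apply Rdiv_lt_0_compat; [apply sqrt_lt_R0 |]; lra.
  - replace (4 * (sqrt (- D) / 2 * (sqrt (- D) / 2))) with (sqrt (- D) * sqrt (- D)) by field.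
    apply sqrt_sqrt. lra.
Qed.

Lemma exists_pos_sqrt D : 0 < D -> exists r, 0 < r /\ r * r = D.
Proof. intro HD. exists (sqrt D). split; [apply sqrt_lt_R0 | apply sqrt_sqrt]; lra. Qed.

(* For [b = 0], [(a - d, c)] is always a root; the other roots have [p = d] and [q] a root
   of [q^2 - f q + f c - c^2 + e (a - 2 d)], whose discriminant is [De] below. *)

Lemma normal_basis_GammaA_b0_a2d a c d e f :
  2 * d - a = 0 -> real_normal_basis (GammaA a 0 c d e f).
Proof.
  intro HD.
  destruct (Req_dec (f - 2 * c) 0) as [HF | HF]; [destruct (Req_dec e 0) as [He | He] |].
  - apply (normal_basis_exp_quad _ (a - d, c) (1, 0) (0, 0) (0, 1)); try GammaA_conds.
    det_nonzero 1 1; lra.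
  - set (ie := / e). assert (Hie : e * ie = 1) by (unfold ie; field; exact He). clearbody ie.
    apply (normal_basis_exp_quad _ (a - d, c) (0, 1) (0, 1) (2 * ie, 0)); try GammaA_conds.
    det_nonzero e (-2); lra.
  - apply (normal_basis_exp2_lin _ (a - d, c) (f - 2 * c, - e) (a - d, f - c)); try GammaA_conds.
    det_nonzero 1 ((f - 2 * c) * (f - 2 * c)); [lra | intro X; apply Rmult_integral in X; tauto].
Qed.

Lemma normal_basis_GammaA_b0_generic a c d e f :
  2 * d - a <> 0 -> real_normal_basis (GammaA a 0 c d e f).
Proof.
  intro HD.
  set (h := / 2). assert (Hh : 2 * h = 1) by (unfold h; field). clearbody h.
  set (De := (f - 2 * c) * (f - 2 * c) + 4 * e * (2 * d - a)).
  assert (EDe : De = (f - 2 * c) * (f - 2 * c) + 4 * e * (2 * d - a)) by reflexivity.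
  clearbody De.
  destruct (Rtotal_order De 0) as [Hlt | [Heq | Hgt]].
  - destruct (exists_pos_half_sqrt_opp De Hlt) as (s & Hsp & Hs).
    apply (normal_basis_trig _ (d, c + (f - 2 * c) * h) (0, s) (a - d, c)); try GammaA_conds.
    det_nonzero 1 (s * (2 * d - a)); [lra | apply Rmult_integral_contrapositive; lra].
  - apply (normal_basis_exp2_lin _ (d, c + (f - 2 * c) * h) (0, 1) (a - d, c)); try GammaA_conds.
    det_nonzero 1 (2 * d - a); lra.
  - destruct (exists_pos_sqrt De Hgt) as (s & Hsp & Hs).
    apply (normal_basis_exp3 _ (a - d, c) (d, c + (f - 2 * c + s) * h) (d, c + (f - 2 * c - s) * h));
      try GammaA_conds.
    det_nonzero 1 (- (2 * d - a) * s); [lra | apply Rmult_integral_contrapositive; lra].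
Qed.

Lemma cubic_has_root (al be ga : R) : exists x, x * x * x + al * x * x + be * x + ga = 0.
Proof.
  set (P x := x * x * x + al * x * x + be * x + ga).
  assert (Hal := Rabs_pos al). assert (Hbe := Rabs_pos be). assert (Hga := Rabs_pos ga).
  assert (Hal' := proj1 (Rabs_le_between al (Rabs al)) (Rle_refl _)).
  assert (Hbe' := proj1 (Rabs_le_between be (Rabs be)) (Rle_refl _)).
  assert (Hga' := proj1 (Rabs_le_between ga (Rabs ga)) (Rle_refl _)).
  (* With [M = 1 + |al| + |be| + |ga|] the cubic term dominates: [P M >= M^2 > 0 > -M^2 >= P (-M)]. *)
  set (M := 1 + Rabs al + Rabs be + Rabs ga).
  assert (Hcube : M * M * M = M * M + (Rabs al + Rabs be + Rabs ga) * (M * M)) by (unfold M; ring).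
  assert (HM : 1 <= M) by (unfold M; lra).
  clearbody M.
  assert (HM2 : 1 <= M * M) by nra.
  assert (Hlow : Rabs be * M + Rabs ga <= (Rabs be + Rabs ga) * (M * M)).
  { assert (0 <= Rabs be * (M * (M - 1))) by (apply Rmult_le_pos; [| apply Rmult_le_pos]; lra).
    assert (0 <= Rabs ga * (M * M - 1)) by (apply Rmult_le_pos; lra).
    lra. }
  assert (0 <= (al + Rabs al) * (M * M) /\ 0 <= (Rabs al - al) * (M * M) /\
          0 <= (be + Rabs be) * M /\ 0 <= (Rabs be - be) * M)
    by (repeat split; apply Rmult_le_pos; lra).
  assert (HPM : 0 < P M) by (unfold P; cbv beta; lra).
  assert (HPm : P (- M) < 0) by (unfold P; cbv beta; lra).
  destruct (IVT P (- M) M ltac:(unfold P; reg) ltac:(lra) HPm HPM) as (x & _ & Hx).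
  exists x. exact Hx.
Qed.

(* Eliminating [q] through the first equation leaves a cubic in [p]. *)
Lemma GammaA_real_root a b c d e f : b <> 0 ->
  exists p q, p * p - a * p - b * q + r11 a b c d e f = 0 /\
              p * q - c * p - d * q + r12 a b c d e f = 0 /\
              q * q - e * p - f * q + r22 a b c d e f = 0.
Proof.
  intro Hb.
  destruct (cubic_has_root (- (a + d)) (r11 a b c d e f + a * d - b * c)
                           (b * r12 a b c d e f - d * r11 a b c d e f)) as [p Hp].
  set (ib := / b). assert (Hib : b * ib = 1) by (unfold ib; field; exact Hb). clearbody ib.
  exists p, ((p * p - a * p + r11 a b c d e f) * ib).
  assert (Hb4 : b * b * b * b <> 0) by (repeat apply Rmult_integral_contrapositive_currified; exact Hb).
  unfold r11, r12, r22 in *. repeat split.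
  - nsatz.
  - apply (Rmult_eq_reg_l (b * b * b * b)); [| exact Hb4]. rewrite Rmult_0_r. clear_ineqs. nsatz.
  - apply (Rmult_eq_reg_l (b * b * b * b)); [| exact Hb4]. rewrite Rmult_0_r. clear_ineqs. nsatz.
Qed.

Section GammaA_b_nonzero.
Variables (a b c d e f p q : R).
Hypothesis Hb : b <> 0.
Hypothesis E11 : p * p - a * p - b * q + r11 a b c d e f = 0.
Hypothesis E12 : p * q - c * p - d * q + r12 a b c d e f = 0.
Hypothesis E22 : q * q - e * p - f * q + r22 a b c d e f = 0.
(* The other roots are [(p + s, q + (s^2 - A s) / b)] with [s^2 - T s + K = 0].  The
   abbreviations and the inverses [h = 1/2], [ib = 1/b] are kept abstract so that the
   [nsatz] certificates stay small. *)
Variables (A Dd T K h ib : R).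
Hypotheses (EA : A = a - 2 * p) (ED : Dd = d - p) (ET : T = A + Dd) (EK : K = A * Dd - b * (c - q)).
Hypotheses (Hh : 2 * h = 1) (Hib : b * ib = 1).

Lemma normal_basis_GammaA_disc_neg : T * T - 4 * K < 0 -> real_normal_basis (GammaA a b c d e f).
Proof.
  intro HDe. destruct (exists_pos_half_sqrt_opp _ HDe) as (s & Hsp & Hs).
  apply (normal_basis_trig _ (p + T * h, q + ((T * h) * (T * h) - s * s - A * T * h) * ib)
                             (s, s * Dd * ib) (p, q)); try GammaA_conds.
  det_nonzero b (s * ((T * h) * (T * h) + s * s)); [exact Hb |].
  apply Rmult_integral_contrapositive. split; [lra |].
  assert (0 <= (T * h) * (T * h)) by apply Rle_0_sqr. nra.
Qed.

Lemma normal_basis_GammaA_disc_zero : T * T - 4 * K = 0 -> real_normal_basis (GammaA a b c d e f).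
Proof.
  intro HDe. destruct (Req_dec T 0) as [HT | HT].
  - apply (normal_basis_exp_quad _ (p, q) (b, - A) (b, - A) (0, 2 * b)); try GammaA_conds.
    det_nonzero 1 (2 * b * b); [lra | apply Rmult_integral_contrapositive; split; lra].
  - apply (normal_basis_exp2_lin _ (p + T * h, q + ((T * h) * (T * h) - A * (T * h)) * ib)
                                 (b, Dd) (p, q)); try GammaA_conds.
    det_nonzero 1 ((T * h) * (T * h)); [lra |].
    apply Rmult_integral_contrapositive; split; apply Rmult_integral_contrapositive; lra.
Qed.

Lemma normal_basis_GammaA_disc_pos : T * T - 4 * K > 0 -> real_normal_basis (GammaA a b c d e f).
Proof.
  intro HDe. destruct (exists_pos_sqrt _ HDe) as (r & Hrp & Hr).
  destruct (Req_dec K 0) as [HK | HK].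
  - assert (HT : T <> 0) by (intro; subst; nra).
    apply (normal_basis_exp2_lin _ (p, q) (b, - A) (p + T, q + Dd * T * ib)); try GammaA_conds.
    det_nonzero 1 (T * T); [lra | apply Rmult_integral_contrapositive; tauto].
  - set (s1 := (T + r) * h). set (s2 := (T - r) * h).
    assert (E1 : s1 = (T + r) * h) by reflexivity. assert (E2 : s2 = (T - r) * h) by reflexivity.
    clearbody s1 s2.
    apply (normal_basis_exp3 _ (p, q) (p + s1, q + (s1 * s1 - A * s1) * ib)
                                      (p + s2, q + (s2 * s2 - A * s2) * ib)); try GammaA_conds.
    det_nonzero b (- K * r); [exact Hb |].
    intro X. assert (K * r = 0) by lra. apply Rmult_integral in H. lra.
Qed.
End GammaA_b_nonzero.

Lemma normal_basis_GammaA a b c d e f : real_normal_basis (GammaA a b c d e f).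
Proof.
  destruct (Req_dec b 0) as [-> | Hb].
  - destruct (Req_dec (2 * d - a) 0).
    + apply normal_basis_GammaA_b0_a2d; assumption.
    + apply normal_basis_GammaA_b0_generic; assumption.
  - destruct (GammaA_real_root a b c d e f Hb) as (p & q & E11 & E12 & E22).
    assert (Hh : 2 * / 2 = 1) by field. assert (Hib : b * / b = 1) by (field; exact Hb).
    set (A := a - 2 * p). set (Dd := d - p). set (T := A + Dd). set (K := A * Dd - b * (c - q)).
    destruct (Rtotal_order (T * T - 4 * K) 0) as [HDe | [HDe | HDe]];
      [apply (normal_basis_GammaA_disc_neg a b c d e f p q Hb E11 E12 E22 A Dd T K (/ 2) (/ b))
      | apply (normal_basis_GammaA_disc_zero a b c d e f p q Hb E11 E12 E22 A Dd T K (/ 2) (/ b))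
      | apply (normal_basis_GammaA_disc_pos a b c d e f p q Hb E11 E12 E22 A Dd T K (/ 2) (/ b))];
      reflexivity || assumption.
Qed.

Theorem theorem2p2 (a b c d e f : R) :
  (exists (n : nat) (B : nat -> R -> R -> Cx),
     cbasis_Qc (GammaA a b c d e f) n B /\
     forall k, (k < n)%nat ->
       exists (a1 a2 : Cx) (p : nat -> nat -> Cx),
         (forall x y, B k x y = Cmul (cexplin a1 a2 x y) (cpoly2 p x y)) /\
         in_Qc (GammaA a b c d e f) (cexplin a1 a2))
  /\
  (exists (L1 L2 L3 : R * R) (q : nat -> nat -> R) (B : nat -> R -> R -> R),
     rbasis_Q (GammaA a b c d e f) 3 B /\
     ( (forall x y, B 0%nat x y = exp (lin L1 x y) * cos (lin L2 x y) /\
                    B 1%nat x y = exp (lin L1 x y) * sin (lin L2 x y) /\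
                    B 2%nat x y = exp (lin L3 x y))
     \/ (forall x y, B 0%nat x y = exp (lin L1 x y) /\
                     B 1%nat x y = exp (lin L2 x y) /\
                     B 2%nat x y = exp (lin L3 x y))
     \/ (forall x y, B 0%nat x y = exp (lin L1 x y) /\
                     B 1%nat x y = lin L2 x y * exp (lin L1 x y) /\
                     B 2%nat x y = exp (lin L3 x y))
     \/ (forall x y, B 0%nat x y = exp (lin L1 x y) /\
                     B 1%nat x y = lin L2 x y * exp (lin L1 x y) /\
                     B 2%nat x y = rpoly2 q x y * exp (lin L1 x y)))).
Proof.
  assert (H := normal_basis_GammaA a b c d e f).
  split; [exact (complex_basis_of_real_normal _ H) | exact H].
Qed.
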